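(* For $\alpha=\pi/4$, no deterministic online algorithm can achieve competitive ratio better than $\frac{1+\sqrt2}{2}$.
   Context: Online drone coverage on a line. A drone has a fixed half angle-of-view $\alpha$. A drone at a point $T=(t_x,t_y)$ with $t_y\ge 0$ covers the segment $[t_x-t_y\tan\alpha,\ t_x+t_y\tan\alpha]$ of the $x$-axis. An input is a finite sequence of points $X_0=(0,0),X_1,\dots,X_n$ ($n\ge1$) on the $x$-axis, revealed one at a time. A solution is a sequence of drone positions $P_0=(0,0),P_1,\dots,P_n$ in the closed upper half-plane such that $P_i$ covers $X_0,\dots,X_i$; its cost is $\sum_{i=0}^{n-1}|P_iP_{i+1}|$. A deterministic online algorithm chooses $P_i$ knowing only $X_0,\dots,X_i$ (not $n$). $\mathrm{OPT}$ is the minimum cost of a solution when the whole input is known in advance. The competitive ratio of an algorithm is the supremum over inputs of its cost divided by $\mathrm{OPT}$. *)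

From Stdlib Require Import Reals List.
Import ListNotations.
Open Scope R_scope.

(* A drone position T = (t_x, t_y) with half angle-of-view alpha covers the
   point x of the x-axis iff t_y >= 0 and x in [t_x - t_y tan alpha, t_x + t_y tan alpha]. *)
Definition covers (alpha : R) (T : R * R) (x : R) : Prop :=
  0 <= snd T /\ fst T - snd T * tan alpha <= x /\ x <= fst T + snd T * tan alpha.

(* An input is X_0 = 0 followed by xs = [X_1; ...; X_n] (n >= 1, i.e. xs <> nil).
   A solution is given by ps = [P_1; ...; P_n]; P_0 = (0,0) is implicit. *)
Definition valid_solution (alpha : R) (xs : list R) (ps : list (R * R)) : Prop :=
  length ps = length xs /\
  forall i : nat, (i < length xs)%nat ->
    covers alpha (nth i ps (0,0)) 0 /\
    forall j : nat, (j <= i)%nat -> covers alpha (nth i ps (0,0)) (nth j xs 0).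

Definition dist (P Q : R * R) : R :=
  sqrt ((fst P - fst Q) ^ 2 + (snd P - snd Q) ^ 2).

Fixpoint path_len (prev : R * R) (ps : list (R * R)) : R :=
  match ps with
  | [] => 0
  | p :: ps' => dist prev p + path_len p ps'
  end.

Definition cost (ps : list (R * R)) : R := path_len (0,0) ps.

Definition is_OPT (alpha : R) (xs : list R) (v : R) : Prop :=
  (forall ps, valid_solution alpha xs ps -> v <= cost ps) /\
  (forall w, (forall ps, valid_solution alpha xs ps -> w <= cost ps) -> w <= v).

(* A deterministic online algorithm: P_i is a function of the revealed prefix
   [X_1; ...; X_i] only (X_0 = 0 is fixed, and n is unknown). *)
Definition online_alg := list R -> R * R.

Definition alg_run (A : online_alg) (xs : list R) : list (R * R) :=
  map (fun i => A (firstn (S i) xs)) (seq 0 (length xs)).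

Definition online_valid (alpha : R) (A : online_alg) : Prop :=
  forall xs, xs <> [] -> valid_solution alpha xs (alg_run A xs).

From Pilot Require Import Defs.
From Stdlib Require Import Reals List.
Open Scope R_scope.
From Stdlib Require Import Lra Psatz Lia Classical.
Import ListNotations.

(* The adversary reveals 1, -c, c^2, -c^3, ..., so that OPT on the first n + 2 points is
   c^n sqrt ((1 + c^2) / 2).  Let s = (-1)^j be the side of the j-th point (-c)^j.  A drone
   covering it has linear potential (c + 1) y + (c - 1) s x at least c^(j+1), and flipping
   s costs a factor c and a loss of (c^2 - 1) c^j.  The potential is
   sqrt (2 (1 + c^2))-Lipschitz, so subtracting that multiple of the cost paid gives a
   quantity which, for an algorithm r-competitive on every prefix, decreases after
   normalisation by c^j by a fixed amount at each step while staying bounded below, as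
   soon as r < c (c + 1) / (1 + c^2).  This bound is (1 + sqrt 2) / 2 at c = 1 + sqrt 2. *)

Lemma firstn_seq (s n k : nat) : (k <= n)%nat -> firstn k (seq s n) = seq s k.
Proof.
  revert s k; induction n as [|n IH]; intros s [|k] Hk; try reflexivity.
  - lia.
  - cbn. f_equal. apply IH. lia.
Qed.

Lemma nth_map_seq {T : Type} (f : nat -> T) (n j : nat) (d : T) :
  (j < n)%nat -> nth j (map f (seq 0 n)) d = f j.
Proof.
  intros Hj.
  rewrite (nth_indep _ d (f 0%nat)) by (rewrite length_map, length_seq; exact Hj).
  now rewrite map_nth, seq_nth.
Qed.

Lemma dist_triangle (P Q S : R * R) :
  Defs.dist P S <= Defs.dist P Q + Defs.dist Q S.
Proof.
  unfold Defs.dist; rewrite <- !Rsqr_pow2.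
  exact (triangle (fst P) (snd P) (fst S) (snd S) (fst Q) (snd Q)).
Qed.

Lemma linear_le_dist (p q : R) (P Q : R * R) :
  p * (fst Q - fst P) + q * (snd Q - snd P) <= sqrt (p ^ 2 + q ^ 2) * Defs.dist P Q.
Proof.
  unfold Defs.dist.
  set (dx := fst Q - fst P); set (dy := snd Q - snd P).
  replace ((fst P - fst Q) ^ 2 + (snd P - snd Q) ^ 2) with (dx ^ 2 + dy ^ 2)
    by (unfold dx, dy; ring).
  rewrite <- sqrt_mult_alt by nra.
  apply Rle_trans with (Rabs (p * dx + q * dy)); [apply Rle_abs|].
  rewrite <- sqrt_Rsqr_abs; apply sqrt_le_1_alt.
  assert (Hlagrange : (p ^ 2 + q ^ 2) * (dx ^ 2 + dy ^ 2) - (p * dx + q * dy)²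
                     = (p * dy - q * dx) ^ 2) by (unfold Rsqr; ring).
  pose proof (pow2_ge_0 (p * dy - q * dx)); lra.
Qed.

Lemma path_len_nonneg (prev : R * R) (ps : list (R * R)) : 0 <= path_len prev ps.
Proof.
  revert prev; induction ps as [|p ps IH]; intros prev; cbn; [lra|].
  pose proof (sqrt_pos ((fst prev - fst p) ^ 2 + (snd prev - snd p) ^ 2)).
  pose proof (IH p); unfold Defs.dist; lra.
Qed.

Lemma dist_le_path_len (prev d : R * R) (ps : list (R * R)) (i : nat) :
  (i < length ps)%nat -> Defs.dist prev (nth i ps d) <= path_len prev ps.
Proof.
  revert prev i; induction ps as [|p ps IH]; intros prev [|i] Hi; cbn in Hi |- *; try lia.
  - pose proof (path_len_nonneg p ps); lra.
  - pose proof (dist_triangle prev p (nth i ps d)).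
    pose proof (IH p i ltac:(lia)); lra.
Qed.

Lemma path_len_snoc (prev p d : R * R) (ps : list (R * R)) :
  path_len prev (ps ++ [p]) = path_len prev ps + Defs.dist (last (prev :: ps) d) p.
Proof.
  revert prev; induction ps as [|q ps IH]; intros prev; cbn [app path_len].
  - cbn; ring.
  - rewrite IH; cbn [last]; ring.
Qed.

Lemma dist_diag (P : R * R) : Defs.dist P P = 0.
Proof.
  unfold Defs.dist; rewrite <- sqrt_0; f_equal; ring.
Qed.

Lemma path_len_repeat (p : R * R) (n : nat) : path_len p (repeat p n) = 0.
Proof.
  induction n as [|n IH]; cbn; [reflexivity|].
  rewrite IH, dist_diag; ring.
Qed.

Lemma covers_PI4 (T : R * R) (x : R) :
  covers (PI / 4) T x <-> 0 <= snd T /\ fst T - snd T <= x <= fst T + snd T.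
Proof. unfold covers; rewrite tan_PI4, !Rmult_1_r; tauto. Qed.

(* The optimum flies straight to the apex of the right angle standing on [a, b]. *)
Lemma is_OPT_PI4 (xs : list R) (a b : R) :
  xs <> [] -> a <= 0 <= b -> In a xs -> In b xs ->
  (forall x, In x xs -> a <= x <= b) ->
  is_OPT (PI / 4) xs (sqrt ((a ^ 2 + b ^ 2) / 2)).
Proof.
  intros Hne Hab Ha Hb Hxs.
  assert (Hn : (0 < length xs)%nat) by (destruct xs; [congruence | cbn; lia]).
  split.
  - intros ps [Hlen Hval].
    set (P := nth (length xs - 1) ps (0, 0)).
    destruct (Hval (length xs - 1)%nat ltac:(lia)) as [_ Hall].
    assert (HP : forall x, In x xs -> covers (PI / 4) P x).
    { intros x Hx; destruct (In_nth xs x 0 Hx) as [j [Hj <-]].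
      apply Hall; lia. }
    pose proof (proj1 (covers_PI4 P a) (HP a Ha)) as HPa.
    pose proof (proj1 (covers_PI4 P b) (HP b Hb)) as HPb.
    apply Rle_trans with (Defs.dist (0, 0) P).
    + unfold Defs.dist; apply sqrt_le_1_alt; cbn [fst snd].
      (* x^2 + y^2 = ((x - y)^2 + (x + y)^2) / 2 *)
      nra.
    + apply dist_le_path_len; lia.
  - intros w Hw.
    set (apex := ((a + b) / 2, (b - a) / 2)).
    assert (Hvalid : valid_solution (PI / 4) xs (repeat apex (length xs))).
    { split; [apply repeat_length|].
      intros i Hi; rewrite nth_repeat_lt by exact Hi.
      split; [|intros j Hj; pose proof (Hxs _ (nth_In xs 0 (Nat.le_lt_trans j i _ Hj Hi)))];
        apply covers_PI4; cbn; lra. }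
    specialize (Hw _ Hvalid).
    destruct (length xs) as [|m]; [lia|].
    unfold cost in Hw; cbn [repeat path_len] in Hw.
    rewrite path_len_repeat in Hw.
    replace (sqrt ((a ^ 2 + b ^ 2) / 2)) with (Defs.dist (0, 0) apex); [lra|].
    unfold Defs.dist, apex; cbn [fst snd]; f_equal; field.
Qed.

Definition adversary (c : R) (n : nat) : list R := map (fun k => (-c) ^ k) (seq 0 n).

Lemma length_adversary (c : R) (n : nat) : length (adversary c n) = n.
Proof. unfold adversary; now rewrite length_map, length_seq. Qed.

Lemma firstn_adversary (c : R) (n k : nat) :
  (k <= n)%nat -> firstn k (adversary c n) = adversary c k.
Proof. intros Hk; unfold adversary; now rewrite firstn_map, firstn_seq. Qed.

Lemma in_adversary (c x : R) (n : nat) :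
  In x (adversary c n) <-> exists k, (k < n)%nat /\ x = (-c) ^ k.
Proof.
  unfold adversary; rewrite in_map_iff.
  split; intros [k [Hk1 Hk2]]; exists k; rewrite in_seq in *; split; (auto || lia).
Qed.

Lemma pow_opp_sign (c : R) (k : nat) : (-c) ^ k = (-1) ^ k * c ^ k.
Proof. rewrite <- Rpow_mult_distr; f_equal; ring. Qed.

Lemma sign_cases (k : nat) : (-1) ^ k = 1 \/ (-1) ^ k = -1.
Proof.
  induction k as [|k [IH | IH]]; cbn; [left | right | left]; try rewrite IH; ring.
Qed.

Lemma is_OPT_adversary (c : R) (n : nat) :
  1 <= c -> is_OPT (PI / 4) (adversary c (S (S n))) (c ^ n * sqrt ((c ^ 2 + 1) / 2)).
Proof.
  intros Hc.
  set (xs := adversary c (S (S n))); set (m := c ^ n).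
  assert (Hm : 0 < m) by (apply pow_lt; lra).
  assert (Hin : forall k, (k < S (S n))%nat -> In ((-c) ^ k) xs)
    by (intros k Hk; apply in_adversary; eauto).
  assert (Hinner : forall k, (k <= n)%nat -> - m <= (-c) ^ k <= m).
  { intros k Hk.
    assert (Habs : Rabs ((-c) ^ k) <= m).
    { rewrite <- RPow_abs, Rabs_Ropp, Rabs_pos_eq by lra; now apply Rle_pow. }
    pose proof (Rle_abs ((-c) ^ k)); pose proof (Rle_abs (- (-c) ^ k)) as Hneg.
    rewrite Rabs_Ropp in Hneg; lra. }
  assert (Hextremes : forall a b, a <= - m -> m <= b -> a <= (-c) ^ S n <= b ->
            a ^ 2 + b ^ 2 = (1 + c ^ 2) * m ^ 2 -> In a xs -> In b xs ->
            is_OPT (PI / 4) xs (m * sqrt ((c ^ 2 + 1) / 2))).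
  { intros a b Ha Hb Hlast Hab Hina Hinb.
    replace (m * sqrt ((c ^ 2 + 1) / 2)) with (sqrt ((a ^ 2 + b ^ 2) / 2)).
    2:{ rewrite <- (sqrt_pow2 m) at 1 by lra.
        rewrite <- sqrt_mult_alt by nra; f_equal.
        rewrite Hab; field. }
    apply is_OPT_PI4; [discriminate | lra | exact Hina | exact Hinb |].
    intros x [k [Hk ->]]%in_adversary.
    destruct (Nat.eq_dec k (S n)) as [-> | Hkn]; [exact Hlast|].
    specialize (Hinner k ltac:(lia)); lra. }
  pose proof (Hin n ltac:(lia)) as Hinp; pose proof (Hin (S n) ltac:(lia)) as Hinq.
  assert (Hp : (-c) ^ n = (-1) ^ n * m) by apply pow_opp_sign.
  assert (Hq : (-c) ^ S n = - c * ((-1) ^ n * m)) by (rewrite <- Hp; reflexivity).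
  rewrite Hp in Hinp.
  destruct (sign_cases n) as [Hs | Hs]; rewrite Hs in Hq, Hinp.
  - apply (Hextremes ((-c) ^ S n) (1 * m)); try assumption; try rewrite Hq; nra.
  - apply (Hextremes (-1 * m) ((-c) ^ S n)); try assumption; try rewrite Hq; nra.
Qed.

Lemma descent_unbounded_below (delta L : R) (w : nat -> R) :
  0 < delta -> (forall n, w (S n) <= w n - delta) -> ~ (forall n, L <= w n).
Proof.
  intros Hdelta Hstep Hbound.
  assert (Hlin : forall n, w n <= w 0%nat - INR n * delta).
  { induction n as [|n IH]; [cbn; lra|].
    rewrite S_INR; specialize (Hstep n); lra. }
  destruct (INR_archimed delta (w 0%nat - L) Hdelta) as [n Hn].
  specialize (Hlin n); specialize (Hbound n); lra.
Qed.

Lemma geometric_descent_unbounded_below (c kappa L : R) (u : nat -> R) :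
  0 < c -> 0 < kappa -> (forall n, u (S n) <= c * u n - c ^ n * kappa) ->
  ~ (forall n, c ^ n * L <= u n).
Proof.
  intros Hc Hkappa Hstep Hbound.
  apply (descent_unbounded_below (kappa / c) L (fun n => u n / c ^ n)).
  - now apply Rdiv_lt_0_compat.
  - intros n; assert (Hcn : 0 < c ^ n) by now apply pow_lt.
    specialize (Hstep n); cbn [pow].
    apply (Rmult_le_reg_r (c * c ^ n)); [nra|].
    replace (u (S n) / (c * c ^ n) * (c * c ^ n)) with (u (S n)) by (field; lra).
    replace ((u n / c ^ n - kappa / c) * (c * c ^ n)) with (c * u n - c ^ n * kappa)
      by (field; lra).
    exact Hstep.
  - intros n; assert (Hcn : 0 < c ^ n) by now apply pow_lt.
    apply (Rmult_le_reg_r (c ^ n)); [exact Hcn|].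
    replace (u n / c ^ n * c ^ n) with (u n) by (field; lra).
    specialize (Hbound n); lra.
Qed.

(* With [a = y + s x] and [b = y - s x], the potential is [c a + b]; covering [0] and
   [s m] means [b >= 0] and [a >= m], and switching the sign [s] swaps [a] and [b]. *)
Definition potential (c s : R) (P : R * R) : R := (c + 1) * snd P + (c - 1) * s * fst P.

Lemma potential_lipschitz (c s : R) (P Q : R * R) :
  s = 1 \/ s = -1 ->
  potential c s Q - potential c s P <= sqrt ((c + 1) ^ 2 + (c - 1) ^ 2) * Defs.dist P Q.
Proof.
  intros Hs.
  replace ((c + 1) ^ 2 + (c - 1) ^ 2) with (((c - 1) * s) ^ 2 + (c + 1) ^ 2)
    by (destruct Hs as [-> | ->]; ring).
  unfold potential.
  replace ((c + 1) * snd Q + (c - 1) * s * fst Q - ((c + 1) * snd P + (c - 1) * s * fst P))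
    with ((c - 1) * s * (fst Q - fst P) + (c + 1) * (snd Q - snd P)) by ring.
  apply linear_le_dist.
Qed.

Lemma potential_ge (c s m : R) (P : R * R) :
  0 <= c -> s = 1 \/ s = -1 ->
  covers (PI / 4) P 0 -> covers (PI / 4) P (s * m) -> c * m <= potential c s P.
Proof.
  rewrite !covers_PI4; unfold potential.
  intros Hc [-> | ->] H0 Hm; nra.
Qed.

Lemma potential_flip (c s m : R) (P : R * R) :
  1 <= c -> s = 1 \/ s = -1 ->
  covers (PI / 4) P 0 -> covers (PI / 4) P (s * m) ->
  potential c (- s) P <= c * potential c s P - (c ^ 2 - 1) * m.
Proof.
  rewrite !covers_PI4; unfold potential.
  intros Hc Hs H0 Hm.
  assert (Hc2 : 0 <= c ^ 2 - 1) by nra.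
  destruct Hs as [-> | ->]; nra.
Qed.

Section AdversaryRun.

Variables (A : online_alg) (c : R).

Definition adversary_position (k : nat) : R * R :=
  match k with O => (0, 0) | S _ => A (adversary c k) end.

Definition adversary_cost (n : nat) : R := cost (alg_run A (adversary c n)).

Lemma alg_run_adversary (n : nat) :
  alg_run A (adversary c n) = map (fun k => adversary_position (S k)) (seq 0 n).
Proof.
  unfold alg_run; rewrite length_adversary.
  apply map_ext_in; intros k Hk; apply in_seq in Hk.
  now rewrite firstn_adversary by lia.
Qed.

Lemma adversary_cost_S (n : nat) :
  adversary_cost (S n) =
  adversary_cost n + Defs.dist (adversary_position n) (adversary_position (S n)).
Proof.
  unfold adversary_cost, cost; rewrite !alg_run_adversary, seq_S, map_app; cbn [map].
  rewrite (path_len_snoc _ _ (0, 0)); do 2 f_equal.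
  destruct n as [|n]; [reflexivity|].
  rewrite seq_S, map_app, app_comm_cons; apply last_last.
Qed.

Hypothesis HA : online_valid (PI / 4) A.

Lemma adversary_position_covers (j : nat) :
  covers (PI / 4) (adversary_position (S j)) 0 /\
  covers (PI / 4) (adversary_position (S j)) ((-1) ^ j * c ^ j).
Proof.
  destruct (HA (adversary c (S j))) as [_ Hval].
  { intros E; pose proof (length_adversary c (S j)) as Hlen; rewrite E in Hlen; discriminate. }
  rewrite length_adversary in Hval.
  destruct (Hval j ltac:(lia)) as [H0 Hall]; specialize (Hall j (le_n j)).
  rewrite alg_run_adversary, nth_map_seq in H0, Hall by lia.
  unfold adversary in Hall; rewrite nth_map_seq, pow_opp_sign in Hall by lia.
  split; assumption.
Qed.

Hypothesis Hc : 1 < c.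

Let D := sqrt ((c + 1) ^ 2 + (c - 1) ^ 2).

Definition run_potential (j : nat) : R :=
  potential c ((-1) ^ j) (adversary_position (S j)) - D * adversary_cost (S j).

Lemma run_potential_S (j : nat) :
  run_potential (S j) <=
  c * run_potential j + (c - 1) * D * adversary_cost (S j) - (c ^ 2 - 1) * c ^ j.
Proof.
  unfold run_potential; rewrite (adversary_cost_S (S j)).
  set (P := adversary_position (S j)); set (Q := adversary_position (S (S j))).
  set (s := (-1) ^ j).
  replace ((-1) ^ S j) with (- s) by (unfold s; cbn; ring).
  destruct (adversary_position_covers j) as [H0 Hj].
  pose proof (sign_cases j) as Hs; fold s in Hs, Hj.
  pose proof (potential_lipschitz c (- s) P Q ltac:(lra)) as Hlip.
  pose proof (potential_flip c s (c ^ j) P ltac:(lra) Hs H0 Hj) as Hflip.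
  fold D in Hlip.
  nra.
Qed.

Lemma run_potential_ge (j : nat) : c * c ^ j - D * adversary_cost (S j) <= run_potential j.
Proof.
  unfold run_potential.
  destruct (adversary_position_covers j) as [H0 Hj].
  pose proof (potential_ge c _ (c ^ j) _ ltac:(lra) (sign_cases j) H0 Hj); lra.
Qed.

Theorem adversary_beats_ratio (r : R) :
  r * (1 + c ^ 2) < c * (c + 1) ->
  exists n, r * (c ^ n * sqrt ((c ^ 2 + 1) / 2)) < adversary_cost (S (S n)).
Proof.
  intros Hr; apply NNPP; intros Hnot.
  set (E := sqrt ((c ^ 2 + 1) / 2)).
  assert (Hbound : forall n, adversary_cost (S (S n)) <= r * (c ^ n * E)).
  { intros n; apply Rnot_lt_le; intros Hn; apply Hnot; now exists n. }
  assert (HDE : D * E = 1 + c ^ 2).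
  { unfold D, E; rewrite <- sqrt_mult_alt by nra.
    replace (((c + 1) ^ 2 + (c - 1) ^ 2) * ((c ^ 2 + 1) / 2)) with ((1 + c ^ 2) ^ 2) by field.
    apply sqrt_pow2; nra. }
  assert (HD : 0 <= D) by apply sqrt_pos.
  apply (geometric_descent_unbounded_below c ((c - 1) * (c * (c + 1) - r * (1 + c ^ 2)))
           (c ^ 2 - r * (1 + c ^ 2)) (fun n => run_potential (S n))); [lra | nra | |].
  - intros n; cbv beta.
    assert (Hcost : (c - 1) * D * adversary_cost (S (S n)) <= (c - 1) * r * c ^ n * (1 + c ^ 2)).
    { rewrite <- HDE.
      replace ((c - 1) * r * c ^ n * (D * E)) with ((c - 1) * D * (r * (c ^ n * E))) by ring.
      apply Rmult_le_compat_l; [nra | apply Hbound]. }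
    pose proof (run_potential_S (S n)) as Hstep; cbn [pow] in Hstep.
    lra.
  - intros n; cbv beta.
    assert (Hcost : D * adversary_cost (S (S n)) <= r * c ^ n * (1 + c ^ 2)).
    { rewrite <- HDE.
      replace (r * c ^ n * (D * E)) with (D * (r * (c ^ n * E))) by ring.
      apply Rmult_le_compat_l; [exact HD | apply Hbound]. }
    pose proof (run_potential_ge (S n)) as Hge; cbn [pow] in Hge.
    lra.
Qed.

End AdversaryRun.

Theorem corollary1 :
  forall A : online_alg, online_valid (PI / 4) A ->
  forall r : R, r < (1 + sqrt 2) / 2 ->
  exists (xs : list R) (v : R),
    xs <> nil /\ is_OPT (PI / 4) xs v /\ cost (alg_run A xs) > r * v.
Proof.
  intros A HA r Hr.
  set (c := 1 + sqrt 2).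
  assert (Hs2 : sqrt 2 * sqrt 2 = 2) by (apply sqrt_sqrt; lra).
  assert (Hs2_pos : 0 < sqrt 2) by (apply sqrt_lt_R0; lra).
  assert (Hc : 1 < c) by (unfold c; lra).
  assert (Hrc : r * (1 + c ^ 2) < c * (c + 1)) by (unfold c; nra).
  destruct (adversary_beats_ratio A c HA Hc r Hrc) as [n Hn].
  exists (adversary c (S (S n))), (c ^ n * sqrt ((c ^ 2 + 1) / 2)).
  split; [discriminate|].
  split; [apply is_OPT_adversary; lra | exact Hn].
Qed.
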